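(* Suppose that $S^{obs}$ is Minkowski-reduced in a broad sense and the Bravais class of $S$ is primitive rectangular. Then, under the assumption $\mathcal{A}_{2,1}$, $S$ is also Minkowski-reduced in a broad sense. In particular, $S$ is contained in the linear space $$ V_{rP} := \left\{\begin{pmatrix} s_{11} & 0 \\ 0 & s_{22} \end{pmatrix} : s_{11}, s_{22}\in \mathbb R \right\}. $$
   Context: $S$ denotes the true (unknown) $2$-by-$2$ positive-definite metric tensor (Gram matrix) of a 2D lattice basis, and $S^{obs}$ its observed value containing experimental errors. For symmetric $2$-by-$2$ matrices $S, T$, the inner product is $S \bullet T := \mathrm{Trace}(ST)$. A positive-definite symmetric $S$ is Minkowski-reduced in a broad sense if it is Venkov-reduced with respect to the identity $I_2$, i.e. $S \bullet I_2 \le (g S g^T) \bullet I_2$ for every $g \in GL_2(\mathbb Z)$. Assumption $\mathcal{A}_{2,1}$: if the $2$-by-$2$ metric tensor $S$ satisfies $S \bullet T \ge v^T S v$ for some nonzero $v \in \mathbb Z^2$ and some symmetric $2$-by-$2$ matrix $T$, then its observed value $S^{obs}$ also satisfies $S^{obs} \bullet T > 0$. Two lattices are in the same Bravais class if the automorphism groups $\{\sigma \in GL_2(\mathbb Z) : \sigma^T S \sigma = S\}$ of their metric tensors are conjugate in $GL_2(\mathbb Z)$; primitive rectangular is the Bravais class of a lattice with a reduced basis of two orthogonal vectors. *)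

From HB Require Import structures.
From mathcomp Require Import all_boot all_order all_algebra.
Set Implicit Arguments. Unset Strict Implicit. Unset Printing Implicit Defensive.
Import Order.TTheory GRing.Theory Num.Theory.
Local Open Scope ring_scope.

Section Defs.
Variable R : realFieldType.

Definition toR (m n : nat) (g : 'M[int]_(m, n)) : 'M[R]_(m, n) :=
  map_mx (fun z : int => z%:~R) g.

Definition GL2Z (g : 'M[int]_2) : bool := g \in unitmx.

Definition ip (S T : 'M[R]_2) : R := \tr (S *m T).

Definition sym_mx (S : 'M[R]_2) : Prop := S^T = S.

Definition qf (S : 'M[R]_2) (v : 'cV[int]_2) : R :=
  ((toR v)^T *m S *m toR v) 0 0.

Definition posdef (S : 'M[R]_2) : Prop :=
  sym_mx S /\ forall v : 'cV[R]_2, v != 0 -> 0 < (v^T *m S *m v) 0 0.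

(* Minkowski-reduced in a broad sense = Venkov-reduced w.r.t. I_2 *)
Definition minkowski_reduced_broad (S : 'M[R]_2) : Prop :=
  posdef S /\
  forall g : 'M[int]_2, GL2Z g ->
    ip S 1%:M <= ip (toR g *m S *m (toR g)^T) 1%:M.

Definition autS (S : 'M[R]_2) (s : 'M[int]_2) : Prop :=
  GL2Z s /\ (toR s)^T *m S *m toR s = S.

Definition same_bravais (S S' : 'M[R]_2) : Prop :=
  exists g : 'M[int]_2, GL2Z g /\
    forall s : 'M[int]_2, autS S s <-> autS S' (g *m s *m invmx g).

Definition primitive_rectangular (S : 'M[R]_2) : Prop :=
  exists a b : R, 0 < a /\ 0 < b /\ a != b /\
    same_bravais S (\matrix_(i, j) (if i == j then (if i == 0 then a else b) else 0)).

Definition assumption_A21 (S Sobs : 'M[R]_2) : Prop :=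
  forall (v : 'cV[int]_2) (T : 'M[R]_2), v != 0 -> sym_mx T ->
    qf S v <= ip S T -> 0 < ip Sobs T.

Definition in_VrP (S : 'M[R]_2) : Prop := S 0 1 = 0 /\ S 1 0 = 0.

End Defs.

From HB Require Import structures.
From mathcomp Require Import all_boot all_order all_algebra.
From mathcomp Require Import zify lra.
Import Order.TTheory GRing.Theory Num.Theory.
Local Open Scope ring_scope.

(* The Bravais-class hypothesis pulls the automorphism diag(1,-1) of the
   rectangular form back to an automorphism h diag(1,-1) h^-1 of S, with h in
   GL_2(Z); thus M := h^T S h is fixed by diag(1,-1), i.e. diagonal.  Since S^obs
   is reduced, tr S^obs <= tr (h^T S^obs h), i.e. S^obs . T <= 0 for
   T := I - h h^T; hence A_{2,1} forces S . T = tr S - tr M < v^T S v for every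
   v <> 0, in particular below each diagonal entry m_i of M (take v a column of
   h).  With g := h^-1 we have S = g^T M g and tr S - tr M = sum_i m_i (|g_i|^2 - 1)
   over the rows g_i of g, all nonnegative terms; so every |g_i|^2 < 2, each row of
   g is a signed unit vector, and S is diagonal.  A positive diagonal form is
   reduced because no column of a unimodular integer matrix vanishes. *)

Set Implicit Arguments.
Unset Strict Implicit.
Unset Printing Implicit Defensive.

Lemma unitmx_row_neq0 (K : comUnitRingType) n (A : 'M[K]_n) i :
  A \in unitmx -> row i A != 0.
Proof.
move=> /mulmxV AV; apply/eqP => /rowP Ai0.
have := congr1 (fun B : 'M_n => B i i) AV; rewrite !mxE eqxx big1 => [/eqP|j _].
  by rewrite eq_sym oner_eq0.
by have := Ai0 j; rewrite !mxE => ->; rewrite mul0r.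
Qed.

Lemma unitmx_col_neq0 (K : comUnitRingType) n (A : 'M[K]_n) j :
  A \in unitmx -> col j A != 0.
Proof. by rewrite -unitmx_tr -trmx_eq0 tr_col; apply: unitmx_row_neq0. Qed.

Lemma mulmx_congrK (K : comPzRingType) n (u w X : 'M[K]_n) :
  w *m u = 1%:M -> u^T *m (w^T *m X *m w) *m u = X.
Proof.
by move=> wu; rewrite !mulmxA -trmx_mul wu trmx1 mul1mx -mulmxA wu mulmx1.
Qed.

Lemma diag_congrE (K : comPzRingType) n (A : 'M[K]_n) (d : 'rV[K]_n) j k :
  (A^T *m diag_mx d *m A) j k = \sum_i d 0 i * (A i j * A i k).
Proof.
rewrite -mulmxA mul_diag_mx !mxE; apply: eq_bigr => i _.
by rewrite !mxE mulrCA.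
Qed.

Lemma mxtrace_diag_congr (K : comPzRingType) n (A : 'M[K]_n) (d : 'rV[K]_n) :
  \tr (A^T *m diag_mx d *m A) = \sum_i d 0 i * \sum_j A i j ^+ 2.
Proof.
rewrite /mxtrace (eq_bigr _ (fun j _ => diag_congrE A d j j)) exchange_big /=.
by apply: eq_bigr => i _; rewrite mulr_sumr.
Qed.

Lemma sqr_int_ge1 {z : int} : z != 0 -> 1 <= z ^+ 2.
Proof. by move=> /eqP z0; rewrite expr2; nia. Qed.

Lemma row_sqr_sum_ge1 m n (g : 'M[int]_(m, n)) i :
  row i g != 0 -> 1 <= \sum_j g i j ^+ 2.
Proof.
move=> gi0; have [j gij] : exists j, g i j != 0.
  apply/existsP; apply: contraNT gi0 => /existsPn gi0.
  by apply/eqP/rowP => j; rewrite !mxE; apply/eqP/negPn/gi0.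
rewrite (bigD1 j) //= ler_wpDr ?sqr_int_ge1 //.
by apply: sumr_ge0 => k _; apply: sqr_ge0.
Qed.

Lemma row_sqr_sum_lt2 m n (g : 'M[int]_(m, n)) i j k : j != k ->
  \sum_l g i l ^+ 2 < 2 -> g i j * g i k = 0.
Proof.
move=> jk; apply: contraTeq; rewrite mulf_eq0 negb_or -leNgt => /andP[gij gik].
rewrite (bigD1 j) //= (bigD1 k) 1?eq_sym //=.
have := sqr_int_ge1 gij; have := sqr_int_ge1 gik.
have : 0 <= \sum_(l | (l != j) && (l != k)) g i l ^+ 2.
  by apply: sumr_ge0 => l _; apply: sqr_ge0.
set r := \sum_(l | _) _; lia.
Qed.

Section RealMatrices.
Variable R : realFieldType.

Lemma toR_mulmx m n p (A : 'M[int]_(m, n)) (B : 'M[int]_(n, p)) :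
  toR R (A *m B) = toR R A *m toR R B.
Proof. exact: map_mxM. Qed.

Lemma toR_trmx m n (A : 'M[int]_(m, n)) : toR R A^T = (toR R A)^T.
Proof. by apply/matrixP => i j; rewrite !mxE. Qed.

Lemma toR_mulmxV n (h : 'M[int]_n) :
  h \in unitmx -> toR R h *m toR R (invmx h) = 1%:M.
Proof. by move=> Uh; rewrite -toR_mulmx mulmxV // /toR map_mx1. Qed.

Lemma toR_eq0 m n (v : 'M[int]_(m, n)) : (toR R v == 0) = (v == 0).
Proof.
apply/eqP/eqP => [/matrixP v0|->]; last by rewrite /toR map_mx0.
by apply/matrixP => i j; have /eqP := v0 i j; rewrite !mxE intr_eq0 => /eqP.
Qed.

Lemma toR_row_sqr_sum m n (g : 'M[int]_(m, n)) i :
  \sum_j toR R g i j ^+ 2 = (\sum_j g i j ^+ 2)%:~R.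
Proof. by rewrite rmorph_sum; apply: eq_bigr => j _; rewrite mxE rmorphXn. Qed.

Lemma qf_col (S : 'M[R]_2) (h : 'M[int]_2) j :
  qf S (col j h) = ((toR R h)^T *m S *m toR R h) j j.
Proof.
rewrite /qf /toR map_col tr_col -row_mul colE mulmxA -row_mul -colE.
by rewrite !mxE.
Qed.

Lemma posdef_qf_gt0 (S : 'M[R]_2) v : posdef S -> v != 0 -> 0 < qf S v.
Proof. by move=> [_ S_pos] v0; apply: S_pos; rewrite toR_eq0. Qed.

Lemma diag_congr_trace_subE n (d : 'rV[R]_n) (g : 'M[int]_n) :
  \tr ((toR R g)^T *m diag_mx d *m toR R g) - \tr (diag_mx d)
  = \sum_i d 0 i * ((\sum_j g i j ^+ 2)%:~R - 1).
Proof.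
rewrite mxtrace_diag mxtrace_diag_congr -sumrB; apply: eq_bigr => i _.
by rewrite toR_row_sqr_sum mulrBr mulr1.
Qed.

Lemma unitmx_row_excess_ge0 n (d : 'rV[R]_n) (g : 'M[int]_n) i :
  g \in unitmx -> 0 <= d 0 i -> 0 <= d 0 i * ((\sum_j g i j ^+ 2)%:~R - 1).
Proof.
move=> Ug di_ge0; rewrite mulr_ge0 // subr_ge0 ler1z.
exact/row_sqr_sum_ge1/unitmx_row_neq0.
Qed.

Lemma diag_congr_trace_ge n (d : 'rV[R]_n) (g : 'M[int]_n) :
  g \in unitmx -> (forall i, 0 <= d 0 i) ->
  \tr (diag_mx d) <= \tr ((toR R g)^T *m diag_mx d *m toR R g).
Proof.
move=> Ug d_ge0; rewrite -subr_ge0 diag_congr_trace_subE sumr_ge0 // => i _.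
exact: unitmx_row_excess_ge0.
Qed.

Lemma diag_congr_is_diag n (d : 'rV[R]_n) (g : 'M[int]_n) :
  g \in unitmx -> (forall i, 0 <= d 0 i) ->
  (forall i, \tr ((toR R g)^T *m diag_mx d *m toR R g) - \tr (diag_mx d) < d 0 i) ->
  is_diag_mx ((toR R g)^T *m diag_mx d *m toR R g).
Proof.
move=> Ug d_ge0 gap.
have row_lt2 i : \sum_j g i j ^+ 2 < 2.
  have := gap i; rewrite diag_congr_trace_subE (bigD1 i) //=.
  have : 0 <= \sum_(k | k != i) d 0 k * ((\sum_j g k j ^+ 2)%:~R - 1).
    by apply: sumr_ge0 => k _; apply: unitmx_row_excess_ge0.
  have := unitmx_row_excess_ge0 Ug (d_ge0 i); rewrite -(ltr_int R).
  nra.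
apply/is_diag_mxP => j k jk; rewrite diag_congrE big1 // => i _.
by rewrite !mxE -intrM (row_sqr_sum_lt2 jk (row_lt2 i)) mulr0.
Qed.

Implicit Types S Sobs X D : 'M[R]_2.

Lemma in_VrP_is_diag X : in_VrP X <-> is_diag_mx X.
Proof.
split=> [[X01 X10]|/is_diag_mxP Xd]; last by split; apply: Xd.
apply/is_diag_mxP => -[[|[|//]] ?] [[|[|//]] ?] //= _.
  by rewrite -X01; congr (X _ _); exact: val_inj.
by rewrite -X10; congr (X _ _); exact: val_inj.
Qed.

Definition refl_mx : 'M[int]_2 := diag_mx (\row_i (-1) ^+ i).

Lemma toR_refl_mx : toR R refl_mx = diag_mx (\row_i (-1) ^+ i).
Proof.
by rewrite /toR map_diag_mx; congr diag_mx; apply/rowP => i; rewrite !mxE rmorph_sign.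
Qed.

Lemma refl_mx_congr_diag (d : 'rV[R]_2) :
  (toR R refl_mx)^T *m diag_mx d *m toR R refl_mx = diag_mx d.
Proof.
rewrite toR_refl_mx tr_diag_mx !mulmx_diag; congr diag_mx; apply/rowP => i.
by rewrite !mxE mulrAC -expr2 sqrr_sign mul1r.
Qed.

Lemma refl_mx_unit : refl_mx \in unitmx.
Proof.
have refl_mxK : refl_mx *m refl_mx = 1%:M.
  rewrite mulmx_diag -diag_const_mx; congr diag_mx; apply/rowP => i.
  by rewrite !mxE -expr2 sqrr_sign.
by case: (mulmx1_unit refl_mxK).
Qed.

Lemma refl_mx_fixed_is_diag X :
  (toR R refl_mx)^T *m X *m toR R refl_mx = X -> is_diag_mx X.
Proof.
rewrite toR_refl_mx tr_diag_mx mul_diag_mx mul_mx_diag => /matrixP X_fixed.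
apply/is_diag_mxP => i j ij; have := X_fixed i j; rewrite !mxE.
by case: i j ij => [[|[|//]] ?] [[|[|//]] ?] //= _; rewrite expr0 expr1; lra.
Qed.

Lemma refl_mx_autS D : is_diag_mx D -> autS D refl_mx.
Proof.
move=> /diag_mxP[d ->]; split; [exact: refl_mx_unit | exact: refl_mx_congr_diag].
Qed.

Lemma primitive_rectangular_congr_diag S : primitive_rectangular S ->
  exists2 h : 'M[int]_2, h \in unitmx & is_diag_mx ((toR R h)^T *m S *m toR R h).
Proof.
case=> a [b [_ [_ [_ [g [Ug autS_g]]]]]].
have [_ E] : autS S (invmx g *m refl_mx *m g).
  apply/autS_g; rewrite !mulmxA mulmxV // mul1mx -mulmxA mulmxV // mulmx1.
  apply: refl_mx_autS; apply/is_diag_mxP => i j ij.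
  by rewrite mxE ifN // -val_eqE.
exists (invmx g); first by rewrite unitmx_inv.
set M := _ *m toR R (invmx g).
have S_M : S = (toR R g)^T *m ((toR R refl_mx)^T *m M *m toR R refl_mx) *m toR R g.
  by rewrite -{1}E !toR_mulmx !trmx_mul !mulmxA.
apply: refl_mx_fixed_is_diag.
by rewrite -[LHS](mulmx_congrK _ (toR_mulmxV Ug)) -S_M.
Qed.

Lemma A21_trace_gap_lt_qf S Sobs h v :
  minkowski_reduced_broad Sobs -> assumption_A21 S Sobs ->
  h \in unitmx -> v != 0 ->
  \tr S - \tr ((toR R h)^T *m S *m toR R h) < qf S v.
Proof.
move=> [_ Sobs_min] A21 Uh v0.
pose T := 1%:M - toR R h *m (toR R h)^T.
have ipT X : ip X T = \tr X - \tr ((toR R h)^T *m X *m toR R h).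
  by rewrite /ip mulmxBr mulmx1 raddfB /= mulmxA mxtrace_mulC mulmxA.
have T_sym : sym_mx T by rewrite /sym_mx linearB /= trmx1 trmx_mul trmxK.
rewrite -ipT ltNge; apply/negP => le_qf.
have := A21 v T v0 T_sym le_qf; rewrite ipT.
have := Sobs_min h^T; rewrite /GL2Z unitmx_tr => /(_ Uh).
rewrite /ip !mulmx1 toR_trmx trmxK; lra.
Qed.

Lemma posdef_diag_minkowski_reduced S :
  posdef S -> is_diag_mx S -> minkowski_reduced_broad S.
Proof.
move=> S_pd /diag_mxP[d S_d]; split=> // k Uk.
have d_gt0 i : 0 < d 0 i.
  have := posdef_qf_gt0 S_pd (unitmx_col_neq0 i (unitmx1 _ _)).
  by rewrite qf_col /toR map_mx1 trmx1 mul1mx mulmx1 S_d mxE eqxx mulr1n.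
have -> : toR R k = (toR R k^T)^T by rewrite toR_trmx trmxK.
rewrite /ip !mulmx1 S_d trmxK; apply: diag_congr_trace_ge => [|i].
  by rewrite unitmx_tr.
exact: ltW.
Qed.

End RealMatrices.

Unset Implicit Arguments.

Theorem mainTheorem2 (R : realFieldType) (S Sobs : 'M[R]_2) :
  posdef S -> sym_mx Sobs ->
  minkowski_reduced_broad Sobs ->
  primitive_rectangular S ->
  assumption_A21 S Sobs ->
  minkowski_reduced_broad S /\ in_VrP S.
Proof.
move=> S_pd _ Sobs_red S_rect A21.
have [h Uh M_diag] := primitive_rectangular_congr_diag S_rect.
set M := _ *m toR R h in M_diag.
have /diag_mxP[d M_d] := M_diag.
have M_ii i : M i i = d 0 i by rewrite M_d mxE eqxx mulr1n.
have d_gt0 i : 0 < d 0 i by rewrite -M_ii -qf_col posdef_qf_gt0 ?unitmx_col_neq0.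
have S_M : S = (toR R (invmx h))^T *m M *m toR R (invmx h).
  by rewrite mulmx_congrK // toR_mulmxV.
have S_diag : is_diag_mx S.
  rewrite S_M M_d; apply: diag_congr_is_diag => [|i|i].
  - by rewrite unitmx_inv.
  - exact: ltW.
  - rewrite -M_d -S_M -M_ii -qf_col.
    exact: A21_trace_gap_lt_qf Sobs_red A21 Uh (unitmx_col_neq0 i Uh).
split; last exact/in_VrP_is_diag.
exact: posdef_diag_minkowski_reduced.
Qed.
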